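(* Let $f(z)=-2\ln(1+e^{-z/2})$ and, for an integer $k\geq0$ and real $x$, $$H_k(x)=\int_0^{\infty}\mathrm{d}\ell\;\ell^{2k+1}\big(f(\ell+x)-f(\ell-x)\big).$$ Then $H_k$ is an odd polynomial of degree $2k+3$, given by $$H_k(x)=(2k+1)!\sum_{i=0}^{k+1}\theta_{i-1}\,\frac{x^{2k+3-2i}}{(2k+3-2i)!},$$ where $\theta_m=\zeta(2m+2)\,(2^{2m+3}-4)$ for $m\geq-1$ (in particular $\theta_{-1}=1$).
   Context: $\zeta$ denotes the Riemann zeta function, with $\zeta(0)=-\tfrac12$. *)

From Stdlib Require Import Reals.
From Coquelicot Require Import Coquelicot.
Open Scope R_scope.

Definition fL (z : R) : R := -2 * ln (1 + exp (- z / 2)).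

(* Riemann zeta at non-negative integers n:
   zeta 0 = -1/2 (convention from the context), and for n >= 1 the
   Dirichlet series sum_{j>=1} 1/j^n (only used for even n >= 2,
   where it converges). *)
Definition zeta_nat (n : nat) : R :=
  match n with
  | O => - / 2
  | _ => Series (fun j : nat => / (INR (S j)) ^ n)
  end.

(* theta_shift i = theta_{i-1} = zeta(2i) * (2^{2i+1} - 4), i >= 0,
   i.e. theta_m = zeta(2m+2) (2^{2m+3} - 4) with m = i - 1 >= -1. *)
Definition theta_shift (i : nat) : R :=
  zeta_nat (2 * i) * (2 ^ (2 * i + 1) - 4).

From Stdlib Require Import Reals Lra Lia Factorial.
From Coquelicot Require Import Coquelicot.
Open Scope R_scope.

(* The substitutions u = l + x and u = l - x turn the integral over [0, b] into integrals
   of (u - x)^n f(u) over [0, b + x] and of (u + x)^n f(u) over [0, b - x], up to two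
   boundary pieces near the origin; for odd n the reflection identity f(y) - f(-y) = y
   merges these into the integral of (u - x)^n u over [0, x], which is the i = 0 term.
   Expanding (u - x)^n and (u + x)^n binomially, the odd moments of f cancel, and the even
   ones come from
     int_0^oo u^p f(u) du = -2 p! (2^(p+1) - 1) zeta(p + 2):
   integrate ln(1 + y) = sum_m (-1)^m y^(m+1) / (m+1) at y = e^(-u/2) termwise against
   int_0^oo u^p e^(-cu) du = p! / c^(p+1), the error of the truncated series being bounded
   uniformly in the upper limit of integration. *)

Lemma exp_pow (a : R) (j : nat) : exp a ^ j = exp (INR j * a).
Proof.
  induction j as [|j IH].
  - now rewrite Rmult_0_l, exp_0.
  - rewrite <- tech_pow_Rmult, IH, <- exp_plus, S_INR. f_equal. ring.
Qed.

Lemma pow_opp_odd (k : nat) (a : R) : (- a) ^ (2 * k + 1) = - a ^ (2 * k + 1).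
Proof.
  replace (- a) with (-1 * a) by ring.
  rewrite Rpow_mult_distr, Nat.add_1_r, pow_1_odd. ring.
Qed.

Lemma pow_opp_even (k : nat) (a : R) : (- a) ^ (2 * k) = a ^ (2 * k).
Proof. replace (- a) with (-1 * a) by ring. rewrite Rpow_mult_distr, pow_1_even. ring. Qed.

Lemma sum_f_R0_pairs (T : nat -> R) (k : nat) :
  sum_f_R0 T (2 * k + 1) = sum_f_R0 (fun m => T (2 * m)%nat + T (2 * m + 1)%nat) k.
Proof.
  induction k as [|k IH]; [reflexivity|].
  replace (2 * S k + 1)%nat with (S (S (2 * k + 1))) by lia.
  rewrite !tech5, IH.
  replace (S (2 * k + 1)) with (2 * S k)%nat by lia.
  replace (S (2 * S k)) with (2 * S k + 1)%nat by lia. ring.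
Qed.

Lemma ex_RInt_of_continuous (g : R -> R) (a b : R) :
  (forall z, continuous g z) -> ex_RInt g a b.
Proof. intros Hg. apply (ex_RInt_continuous (V := R_CompleteNormedModule)). intros z _. apply Hg. Qed.

Lemma ex_RInt_of_ex_derive (f : R -> R) (a b : R) :
  (forall z, ex_derive f z) -> ex_RInt f a b.
Proof.
  intros Hf. apply ex_RInt_of_continuous.
  intros z. apply (@ex_derive_continuous R_AbsRing R_NormedModule), Hf.
Qed.

Lemma continuous_poly_mul (P f : R -> R) (z : R) :
  ex_derive P z -> continuous f z -> continuous (fun u => P u * f u) z.
Proof.
  intros HP Hf. apply (continuous_mult (K := R_AbsRing) P f); [|exact Hf].
  apply (@ex_derive_continuous R_AbsRing R_NormedModule), HP.
Qed.

Lemma is_RInt_sum_f_R0 (g : nat -> R -> R) (v : nat -> R) (a b : R) (N : nat) :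
  (forall m, is_RInt (g m) a b (v m)) ->
  is_RInt (fun u => sum_f_R0 (fun m => g m u) N) a b (sum_f_R0 v N).
Proof.
  intros Hg. induction N as [|N IH]; [apply Hg|].
  apply (is_RInt_plus (V := R_NormedModule)); [exact IH | apply Hg].
Qed.

Lemma RInt_comp_plus (g : R -> R) (c a b : R) : (forall z, continuous g z) ->
  RInt (fun y => g (y + c)) a b = RInt g (a + c) (b + c).
Proof.
  intros Hg.
  transitivity (RInt (fun y => scal 1 (g (1 * y + c))) a b).
  - apply RInt_ext. intros y _. unfold scal. simpl. unfold mult. simpl.
    rewrite !Rmult_1_l. reflexivity.
  - rewrite (RInt_comp_lin (V := R_CompleteNormedModule)), !Rmult_1_l; [reflexivity|].
    apply ex_RInt_of_continuous, Hg.
Qed.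

Lemma RInt_comp_opp (g : R -> R) (a b : R) : (forall z, continuous g z) ->
  RInt (fun y => g (- y)) a b = - RInt g (- a) (- b).
Proof.
  intros Hg.
  transitivity (- RInt (fun y => scal (-1) (g (-1 * y + 0))) a b).
  - rewrite <- (RInt_opp (V := R_CompleteNormedModule)).
    + apply RInt_ext. intros y _. unfold scal, opp. simpl. unfold mult. simpl.
      replace (-1 * y + 0) with (- y) by ring. ring.
    + apply (ex_RInt_comp_lin (V := R_NormedModule)), ex_RInt_of_continuous, Hg.
  - rewrite (RInt_comp_lin (V := R_CompleteNormedModule)); [|apply ex_RInt_of_continuous, Hg].
    f_equal. f_equal; ring.
Qed.

Lemma is_lim_sum_f_R0 (f : nat -> R -> R) (l : nat -> R) (x : Rbar) (N : nat) :
  (forall j, is_lim (f j) x (l j)) ->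
  is_lim (fun y => sum_f_R0 (fun j => f j y) N) x (sum_f_R0 l N).
Proof.
  intros Hf. induction N as [|N IH]; [apply Hf|].
  apply is_lim_plus'; [exact IH | apply Hf].
Qed.

Lemma is_lim_comp_plus (F : R -> R) (c l : R) :
  is_lim F p_infty l -> is_lim (fun b => F (b + c)) p_infty l.
Proof.
  intros H. apply is_lim_spec in H. apply is_lim_spec. intros eps.
  destruct (H eps) as [M HM]. exists (M - c). intros y Hy. apply HM. lra.
Qed.

Lemma is_lim_of_uniform_approx (F : R -> R) (G : nat -> R -> R) (l e : nat -> R) (L : R) :
  (forall n, is_lim (G n) p_infty (l n)) ->
  (forall n b, 0 <= b -> Rabs (F b - G n b) <= e n) ->
  is_lim_seq e 0 -> is_lim_seq l L ->
  is_lim F p_infty L.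
Proof.
  intros HG Hunif He Hl.
  apply is_lim_spec. intros eps.
  assert (Heps3 : 0 < eps / 3) by (pose proof (cond_pos eps); lra).
  set (eps3 := mkposreal _ Heps3).
  apply is_lim_seq_spec in He, Hl.
  destruct (He eps3) as [Ne HNe]. destruct (Hl eps3) as [Nl HNl].
  set (n := Nat.max Ne Nl).
  assert (Hen : Rabs (e n - 0) < eps / 3) by (apply HNe; lia).
  assert (Hln : Rabs (l n - L) < eps / 3) by (apply HNl; lia).
  pose proof (HG n) as Hn. apply is_lim_spec in Hn. destruct (Hn eps3) as [M HM].
  exists (Rmax M 0). intros b Hb.
  assert (HGb : Rabs (G n b - l n) < eps / 3) by (apply HM; pose proof (Rmax_l M 0); lra).
  assert (HFb : Rabs (F b - G n b) <= e n) by (apply Hunif; pose proof (Rmax_r M 0); lra).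
  apply Rabs_lt_between in Hen, Hln, HGb. apply Rabs_le_between in HFb.
  apply Rabs_lt_between. lra.
Qed.

Lemma is_RInt_gen_of_is_lim (g : R -> R) (a l : R) :
  (forall b, ex_RInt g a b) ->
  is_lim (fun b => RInt g a b) p_infty l ->
  is_RInt_gen g (at_point a) (Rbar_locally p_infty) l.
Proof.
  intros Hex Hlim P HP.
  apply Filter_prod with (fun c => c = a) (fun b => P (RInt g a b)); [reflexivity | apply Hlim, HP|].
  intros c b -> Hb. exists (RInt g a b). split; [|exact Hb].
  apply (RInt_correct (V := R_CompleteNormedModule)), Hex.
Qed.

(** * Exponential moments *)

Definition exp_taylor (p : nat) (y : R) : R :=
  sum_f_R0 (fun i => y ^ i / INR (fact i)) p.

Lemma exp_taylor_0 (p : nat) : exp_taylor p 0 = 1.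
Proof.
  induction p as [|p IH]; unfold exp_taylor in *.
  - simpl. field.
  - rewrite tech5, IH, pow_i by lia. unfold Rdiv. ring.
Qed.

Lemma exp_taylor_ge0 (p : nat) (y : R) : 0 <= y -> 0 <= exp_taylor p y.
Proof.
  intros Hy. apply cond_pos_sum. intros i.
  apply Rdiv_le_0_compat; [apply pow_le; lra | apply INR_fact_lt_0].
Qed.

Lemma is_derive_exp_taylor (p : nat) (y : R) :
  is_derive (exp_taylor p) y (exp_taylor p y - y ^ p / INR (fact p)).
Proof.
  induction p as [|p IH].
  - unfold exp_taylor. simpl. auto_derive; [trivial | field].
  - apply is_derive_ext with (fun t => exp_taylor p t + t ^ S p / INR (fact (S p)));
      [reflexivity|].
    unfold exp_taylor at 2. rewrite tech5. fold (exp_taylor p y).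
    replace (exp_taylor p y + y ^ S p / INR (fact (S p)) - y ^ S p / INR (fact (S p)))
      with ((exp_taylor p y - y ^ p / INR (fact p)) + INR (S p) * y ^ p / INR (fact (S p)))
      by (rewrite fact_simpl, mult_INR; field; split; [apply INR_fact_neq_0 | apply not_0_INR; lia]).
    apply (is_derive_plus (exp_taylor p)); [exact IH|].
    auto_derive; [trivial|].
    change (match p with 0%nat => 1 | S _ => INR p + 1 end) with (INR (S p)).
    change (fact p + p * fact p)%nat with (fact (S p)).
    unfold Rdiv. ring.
Qed.

Lemma pow_mul_exp_opp_le (i : nat) (y : R) :
  0 < y -> y ^ i * exp (- y) <= INR (fact (S i)) / y.
Proof.
  intros Hy.
  assert (Htaylor : y ^ S i / INR (fact (S i)) <= exp y).
  { pose proof (exp_ge_taylor y (S i) (Rlt_le _ _ Hy)) as H.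
    rewrite tech5 in H. fold (exp_taylor i y) in H.
    pose proof (exp_taylor_ge0 i y (Rlt_le _ _ Hy)). lra. }
  pose proof (INR_fact_lt_0 (S i)). pose proof (exp_pos y). pose proof (pow_lt y i Hy).
  rewrite exp_Ropp, <- tech_pow_Rmult in *.
  apply (Rmult_le_reg_r (y * exp y / INR (fact (S i)))).
  { apply Rdiv_lt_0_compat; [apply Rmult_lt_0_compat|]; lra. }
  replace (y ^ i * / exp y * (y * exp y / INR (fact (S i)))) with (y * y ^ i / INR (fact (S i)))
    by (field; split; lra).
  replace (INR (fact (S i)) / y * (y * exp y / INR (fact (S i)))) with (exp y) by (field; lra).
  exact Htaylor.
Qed.

Lemma is_lim_pow_mul_exp_opp (i : nat) : is_lim (fun y => y ^ i * exp (- y)) p_infty 0.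
Proof.
  apply (is_lim_le_le_loc (fun _ => 0) (fun y => INR (fact (S i)) * / y)).
  - exists 0. intros y Hy. split.
    + apply Rmult_le_pos; [apply pow_le; lra | left; apply exp_pos].
    + apply pow_mul_exp_opp_le. lra.
  - apply is_lim_const.
  - replace (Finite 0) with (Rbar_mult (INR (fact (S i))) (Rbar_inv p_infty))
      by (simpl; f_equal; ring).
    apply is_lim_scal_l, is_lim_inv; [apply is_lim_id | discriminate].
Qed.

Lemma is_lim_exp_opp_mul_exp_taylor (p : nat) :
  is_lim (fun y => exp (- y) * exp_taylor p y) p_infty 0.
Proof.
  apply is_lim_ext with
    (fun y => sum_f_R0 (fun i => / INR (fact i) * (y ^ i * exp (- y))) p).
  { intros y. unfold exp_taylor. rewrite scal_sum. apply sum_eq. intros i _. field.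
    apply INR_fact_neq_0. }
  replace (Finite 0) with (Finite (sum_f_R0 (fun _ => / INR (fact p) * 0) p))
    by (rewrite sum_cte; f_equal; ring).
  apply (is_lim_sum_f_R0 (fun i y => / INR (fact i) * (y ^ i * exp (- y)))).
  intros i. replace (/ INR (fact p) * 0) with (/ INR (fact i) * 0) by ring.
  apply (is_lim_scal_l _ _ _ 0), is_lim_pow_mul_exp_opp.
Qed.

Lemma is_RInt_pow_mul_exp_opp (p : nat) (c b : R) : 0 < c ->
  is_RInt (fun u => u ^ p * exp (- (c * u))) 0 b
    (INR (fact p) / c ^ S p * (1 - exp (- (c * b)) * exp_taylor p (c * b))).
Proof.
  intros Hc.
  set (F := fun u => - (INR (fact p) / c ^ S p) * (exp (- (c * u)) * exp_taylor p (c * u))).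
  replace (INR (fact p) / c ^ S p * (1 - exp (- (c * b)) * exp_taylor p (c * b)))
    with (minus (F b) (F 0))
    by (unfold F, minus, plus, opp; simpl;
        rewrite Rmult_0_r, Ropp_0, exp_0, exp_taylor_0; ring).
  apply (@is_RInt_derive R_CompleteNormedModule F).
  - intros u _. unfold F.
    pose proof (is_derive_exp_taylor p (c * u)) as D.
    auto_derive; [eexists; exact D|].
    erewrite is_derive_unique by exact D. rewrite Rpow_mult_distr.
    field. split; [apply INR_fact_neq_0 | split; [apply pow_nonzero|]; lra].
  - intros u _. apply (@ex_derive_continuous R_AbsRing R_NormedModule). auto_derive. trivial.
Qed.

Lemma is_lim_RInt_pow_mul_exp_opp (p : nat) (c : R) : 0 < c ->
  is_lim (fun b => RInt (fun u => u ^ p * exp (- (c * u))) 0 b) p_infty (INR (fact p) / c ^ S p).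
Proof.
  intros Hc.
  apply is_lim_ext with
    (fun b => INR (fact p) / c ^ S p * (1 - exp (- (c * b)) * exp_taylor p (c * b))).
  { intros b. symmetry. apply is_RInt_unique, is_RInt_pow_mul_exp_opp, Hc. }
  replace (Finite (INR (fact p) / c ^ S p))
    with (Rbar_mult (INR (fact p) / c ^ S p) (Rbar_minus 1 0)) by (simpl; f_equal; ring).
  apply is_lim_scal_l, is_lim_minus'; [apply is_lim_const|].
  apply (is_lim_comp (fun y => exp (- y) * exp_taylor p y) (fun b => c * b) p_infty 0 p_infty).
  - apply is_lim_exp_opp_mul_exp_taylor.
  - apply is_lim_spec. intros M. exists (M / c). intros b Hb. simpl.
    assert (M = c * (M / c)) by (field; lra). nra.
  - exists 0. intros y _. discriminate.
Qed.

Lemma RInt_pow_mul_exp_opp_le (p : nat) (c b : R) : 0 < c -> 0 <= b ->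
  RInt (fun u => u ^ p * exp (- (c * u))) 0 b <= INR (fact p) / c ^ S p.
Proof.
  intros Hc Hb.
  rewrite (is_RInt_unique _ _ _ _ (is_RInt_pow_mul_exp_opp p c b Hc)).
  assert (0 <= exp (- (c * b)) * exp_taylor p (c * b)).
  { apply Rmult_le_pos; [left; apply exp_pos | apply exp_taylor_ge0; nra]. }
  assert (0 < INR (fact p) / c ^ S p).
  { apply Rdiv_lt_0_compat; [apply INR_fact_lt_0 | apply pow_lt; lra]. }
  nra.
Qed.

(** * Taylor expansion of ln (1 + y) *)

Definition ln1p_taylor (N : nat) (y : R) : R :=
  sum_f_R0 (fun m => (-1) ^ m * y ^ S m / INR (S m)) N.

Lemma ln1p_taylor_0 (N : nat) : ln1p_taylor N 0 = 0.
Proof.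
  unfold ln1p_taylor. rewrite (sum_eq _ (fun _ => 0)), sum_cte; [ring|].
  intros m _. rewrite pow_i by lia. unfold Rdiv. ring.
Qed.

Lemma is_derive_ln1p_taylor (N : nat) (t : R) :
  is_derive (ln1p_taylor N) t (sum_f_R0 (fun m => (- t) ^ m) N).
Proof.
  induction N as [|N IH].
  - unfold ln1p_taylor. simpl. auto_derive; [trivial | field].
  - apply is_derive_ext with
      (fun s => ln1p_taylor N s + (-1) ^ S N * s ^ S (S N) / INR (S (S N))); [reflexivity|].
    apply (is_derive_plus (ln1p_taylor N)); [exact IH|].
    auto_derive; [trivial|].
    replace (- t) with (-1 * t) by ring. rewrite Rpow_mult_distr.
    rewrite <- !tech_pow_Rmult. field.
    change (match N with 0%nat => 1 | S _ => INR N + 1 end) with (INR (S N)).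
    rewrite <- S_INR. apply not_0_INR. lia.
Qed.

Lemma ln1p_taylor_error (N : nat) (y : R) : 0 <= y <= 1 ->
  Rabs (ln (1 + y) - ln1p_taylor N y) <= y ^ S (S N).
Proof.
  intros Hy.
  assert (Hderiv : forall t, 0 <= t ->
    is_derive (fun s => ln (1 + s) - ln1p_taylor N s) t ((- t) ^ S N / (1 + t))).
  { intros t Ht.
    replace ((- t) ^ S N / (1 + t)) with (1 / (1 + t) - sum_f_R0 (fun m => (- t) ^ m) N)
      by (rewrite tech3 by lra; field; lra).
    apply (is_derive_minus (fun s => ln (1 + s))); [|apply is_derive_ln1p_taylor].
    auto_derive; [lra | field; lra]. }
  destruct (MVT_gen (fun s => ln (1 + s) - ln1p_taylor N s) 0 y
              (fun t => (- t) ^ S N / (1 + t))) as [c [Hc Hmvt]].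
  - intros t Ht. rewrite Rmin_left, Rmax_right in Ht by lra. apply Hderiv. lra.
  - intros t Ht. rewrite Rmin_left, Rmax_right in Ht by lra.
    apply continuity_pt_filterlim.
    apply (@ex_derive_continuous R_AbsRing R_NormedModule (fun s => ln (1 + s) - ln1p_taylor N s)).
    eexists. apply Hderiv. lra.
  - rewrite Rmin_left, Rmax_right in Hc by lra.
    rewrite ln1p_taylor_0, Rplus_0_r, ln_1, !Rminus_0_r in Hmvt. rewrite Hmvt.
    rewrite Rabs_mult, Rabs_div, <- RPow_abs, Rabs_Ropp, !Rabs_pos_eq by lra.
    rewrite <- (tech_pow_Rmult y (S N)), Rmult_comm.
    apply Rmult_le_compat_l; [lra|].
    apply Rle_trans with (c ^ S N); [|apply pow_incr; lra].
    apply Rle_trans with (c ^ S N / 1); [|lra].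
    apply Rmult_le_compat_l; [apply pow_le; lra|].
    apply Rinv_le_contravar; lra.
Qed.

(** * Partial sums of the zeta and eta series *)

Definition zeta_term (s j : nat) : R := / INR (S j) ^ s.

Lemma zeta_term_pos (s j : nat) : 0 < zeta_term s j.
Proof. apply Rinv_0_lt_compat, pow_lt, lt_0_INR. lia. Qed.

(* Telescoping against 1/(j (j + 1)). *)
Lemma sum_zeta_term_le (q N : nat) :
  sum_f_R0 (zeta_term (S (S q))) N <= 2 - / INR (S N).
Proof.
  induction N as [|N IH].
  - unfold zeta_term. simpl. rewrite Rmult_1_l, pow1, Rinv_1. lra.
  - rewrite tech5.
    enough (zeta_term (S (S q)) (S N) <= / INR (S N) - / INR (S (S N))) by lra.
    unfold zeta_term.
    assert (HN : 1 <= INR (S N)) by (apply (le_INR 1); lia).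
    rewrite (S_INR (S N)).
    replace (/ INR (S N) - / (INR (S N) + 1)) with (/ (INR (S N) * (INR (S N) + 1)))
      by (field; lra).
    apply Rinv_le_contravar; [nra|].
    apply Rle_trans with ((INR (S N) + 1) ^ 2); [nra|].
    apply Rle_pow; [lra | lia].
Qed.

Lemma is_lim_seq_sum_zeta_term (q : nat) :
  is_lim_seq (fun N => sum_f_R0 (zeta_term (S (S q))) N) (zeta_nat (S (S q))).
Proof.
  assert (Hex : ex_series (zeta_term (S (S q)))).
  { apply ex_series_Reals_1, growing_cv.
    - intros n. rewrite tech5. pose proof (zeta_term_pos (S (S q)) (S n)). lra.
    - exists 2. intros x [i ->]. pose proof (sum_zeta_term_le q i).
      assert (0 < / INR (S i)) by (apply Rinv_0_lt_compat, lt_0_INR; lia). lra. }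
  apply is_lim_seq_ext with (sum_n (zeta_term (S (S q)))); [intros n; apply sum_n_Reals|].
  apply (Series_correct _ Hex).
Qed.

Lemma zeta_term_odd (s m : nat) : zeta_term s (2 * m + 1) = / 2 ^ s * zeta_term s m.
Proof.
  unfold zeta_term. replace (S (2 * m + 1)) with (2 * S m)%nat by lia.
  rewrite mult_INR, Rpow_mult_distr, Rinv_mult. reflexivity.
Qed.

Lemma sum_alt_zeta_term (s M : nat) :
  sum_f_R0 (fun m => (-1) ^ m * zeta_term s m) (2 * M + 1) =
  sum_f_R0 (zeta_term s) (2 * M + 1) - 2 / 2 ^ s * sum_f_R0 (zeta_term s) M.
Proof.
  induction M as [|M IH].
  - pose proof (zeta_term_odd s 0) as H. simpl in *. rewrite H. field. apply pow_nonzero. lra.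
  - replace (2 * S M + 1)%nat with (S (S (2 * M + 1))) by lia.
    rewrite !tech5, IH.
    replace (S (2 * M + 1)) with (2 * S M)%nat by lia.
    rewrite pow_1_even, pow_1_odd.
    replace (S (2 * S M)) with (2 * S M + 1)%nat by lia.
    rewrite zeta_term_odd. field. apply pow_nonzero. lra.
Qed.

Lemma is_lim_seq_sum_alt_zeta_term (q : nat) :
  is_lim_seq (fun M => sum_f_R0 (fun m => (-1) ^ m * zeta_term (S (S q)) m) (2 * M + 1))
    ((1 - 2 / 2 ^ S (S q)) * zeta_nat (S (S q))).
Proof.
  apply is_lim_seq_ext with (fun M => sum_f_R0 (zeta_term (S (S q))) (2 * M + 1)
    - 2 / 2 ^ S (S q) * sum_f_R0 (zeta_term (S (S q))) M).
  { intros M. symmetry. apply sum_alt_zeta_term. }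
  replace ((1 - 2 / 2 ^ S (S q)) * zeta_nat (S (S q)))
    with (zeta_nat (S (S q)) - 2 / 2 ^ S (S q) * zeta_nat (S (S q))) by ring.
  apply is_lim_seq_minus'; [|apply (is_lim_seq_scal_l _ _ (zeta_nat (S (S q)))), is_lim_seq_sum_zeta_term].
  apply (is_lim_seq_subseq (fun N => sum_f_R0 (zeta_term (S (S q))) N) _ (fun M => 2 * M + 1)%nat);
    [|apply is_lim_seq_sum_zeta_term].
  intros P [N HN]. exists N. intros n Hn. apply HN. lia.
Qed.

Lemma ln1p_taylor_exp_half (N : nat) (u : R) :
  ln1p_taylor N (exp (- u / 2)) =
  sum_f_R0 (fun m => (-1) ^ m / INR (S m) * exp (- (INR (S m) / 2 * u))) N.
Proof.
  apply sum_eq. intros m _. rewrite exp_pow.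
  replace (INR (S m) * (- u / 2)) with (- (INR (S m) / 2 * u)) by field.
  unfold Rdiv. ring.
Qed.

Lemma is_lim_RInt_pow_mul_ln1p_taylor_exp_half (p N : nat) :
  is_lim (fun b => RInt (fun u => u ^ p * ln1p_taylor N (exp (- u / 2))) 0 b) p_infty
    (INR (fact p) * 2 ^ S p * sum_f_R0 (fun m => (-1) ^ m * zeta_term (S (S p)) m) N).
Proof.
  assert (Hc : forall m, 0 < INR (S m) / 2).
  { intros m. apply Rdiv_lt_0_compat; [apply lt_0_INR; lia | lra]. }
  apply is_lim_ext with (fun b => sum_f_R0 (fun m => (-1) ^ m / INR (S m) *
    RInt (fun u => u ^ p * exp (- (INR (S m) / 2 * u))) 0 b) N).
  { intros b. symmetry. apply is_RInt_unique.
    apply (is_RInt_ext (fun u => sum_f_R0 (fun m => (-1) ^ m / INR (S m) *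
      (u ^ p * exp (- (INR (S m) / 2 * u)))) N)).
    { intros u _. rewrite ln1p_taylor_exp_half, scal_sum.
      apply sum_eq. intros m _. ring. }
    apply is_RInt_sum_f_R0. intros m.
    apply (is_RInt_scal (V := R_NormedModule) (fun u => u ^ p * exp (- (INR (S m) / 2 * u)))).
    apply (RInt_correct (V := R_CompleteNormedModule)).
    eexists. apply is_RInt_pow_mul_exp_opp, Hc. }
  rewrite scal_sum.
  apply (is_lim_sum_f_R0 (fun m b => (-1) ^ m / INR (S m) *
    RInt (fun u => u ^ p * exp (- (INR (S m) / 2 * u))) 0 b)).
  intros m.
  replace ((-1) ^ m * zeta_term (S (S p)) m * (INR (fact p) * 2 ^ S p))
    with ((-1) ^ m / INR (S m) * (INR (fact p) / (INR (S m) / 2) ^ S p)).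
  - apply (is_lim_scal_l _ _ _ (INR (fact p) / (INR (S m) / 2) ^ S p)).
    apply is_lim_RInt_pow_mul_exp_opp, Hc.
  - unfold zeta_term. rewrite <- (tech_pow_Rmult (INR (S m))).
    assert (INR (S m) <> 0) by (apply not_0_INR; lia).
    unfold Rdiv. rewrite Rpow_mult_distr, pow_inv.
    field. repeat split; try apply pow_nonzero; lra.
Qed.

Lemma RInt_pow_mul_ln1p_exp_half_error (p N : nat) (b : R) : 0 <= b ->
  Rabs (RInt (fun u => u ^ p * ln (1 + exp (- u / 2))) 0 b
        - RInt (fun u => u ^ p * ln1p_taylor N (exp (- u / 2))) 0 b)
  <= INR (fact p) * 2 ^ S p / INR (S (S N)).
Proof.
  intros Hb.
  assert (Hn2 : 2 <= INR (S (S N))) by (rewrite !S_INR; pose proof (pos_INR N); lra).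
  set (c := INR (S (S N)) / 2).
  apply Rle_trans with (INR (fact p) / c ^ S p).
  - eapply Rle_trans; [|apply (RInt_pow_mul_exp_opp_le p c b); unfold c; lra].
    apply (norm_RInt_le (V := R_NormedModule)
      (fun u => minus (u ^ p * ln (1 + exp (- u / 2))) (u ^ p * ln1p_taylor N (exp (- u / 2))))
      (fun u => u ^ p * exp (- (c * u))) 0 b); [exact Hb | | |].
    + intros u Hu. change (norm (minus ?a ?b)) with (Rabs (a - b)).
      rewrite <- Rmult_minus_distr_l, Rabs_mult, Rabs_pos_eq by (apply pow_le; lra).
      apply Rmult_le_compat_l; [apply pow_le; lra|].
      replace (- (c * u)) with (INR (S (S N)) * (- u / 2)) by (unfold c; field).
      rewrite <- exp_pow. apply ln1p_taylor_error. split; [left; apply exp_pos|].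
      rewrite <- exp_0. destruct (Rle_lt_or_eq_dec 0 u (proj1 Hu)) as [Hu0 | <-].
      * left. apply exp_increasing. lra.
      * right. f_equal. field.
    + apply (is_RInt_minus (V := R_NormedModule));
        apply (RInt_correct (V := R_CompleteNormedModule)), ex_RInt_of_ex_derive;
        intros z; auto_derive.
      * pose proof (exp_pos (- z / 2)). lra.
      * eexists. apply is_derive_ln1p_taylor.
    + apply (RInt_correct (V := R_CompleteNormedModule)).
      eexists. apply is_RInt_pow_mul_exp_opp. unfold c. lra.
  - set (n2 := INR (S (S N))) in *.
    assert (n2 <= n2 ^ S p) by (rewrite <- (pow_1 n2) at 1; apply Rle_pow; [lra | lia]).
    replace (INR (fact p) / c ^ S p) with (INR (fact p) * 2 ^ S p / n2 ^ S p)
      by (unfold c, Rdiv; rewrite Rpow_mult_distr, pow_inv; field;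
          split; apply pow_nonzero; lra).
    apply Rmult_le_compat_l.
    + apply Rmult_le_pos; [apply pos_INR | apply pow_le; lra].
    + apply Rinv_le_contravar; lra.
Qed.

Lemma is_lim_RInt_pow_mul_ln1p_exp_half (p : nat) :
  is_lim (fun b => RInt (fun u => u ^ p * ln (1 + exp (- u / 2))) 0 b) p_infty
    (INR (fact p) * (2 ^ S p - 1) * zeta_nat (S (S p))).
Proof.
  set (K := INR (fact p) * 2 ^ S p).
  assert (HK : 0 < K) by (apply Rmult_lt_0_compat; [apply INR_fact_lt_0 | apply pow_lt; lra]).
  (* Odd truncation orders: for them the alternating sum reduces to zeta partial sums. *)
  apply (is_lim_of_uniform_approx _
    (fun n b => RInt (fun u => u ^ p * ln1p_taylor (2 * n + 1) (exp (- u / 2))) 0 b)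
    (fun n => K * sum_f_R0 (fun m => (-1) ^ m * zeta_term (S (S p)) m) (2 * n + 1))
    (fun n => K / INR (S n))).
  - intros n. apply is_lim_RInt_pow_mul_ln1p_taylor_exp_half.
  - intros n b Hb. eapply Rle_trans; [apply RInt_pow_mul_ln1p_exp_half_error, Hb|].
    apply Rmult_le_compat_l; [lra|].
    apply Rinv_le_contravar; [apply lt_0_INR; lia | apply le_INR; lia].
  - replace (Finite 0) with (Rbar_mult K (Rbar_inv p_infty)) by (simpl; f_equal; ring).
    apply is_lim_seq_scal_l, (is_lim_seq_incr_1 (fun n => / INR n)).
    apply is_lim_seq_inv; [apply is_lim_seq_INR | discriminate].
  - replace (INR (fact p) * (2 ^ S p - 1) * zeta_nat (S (S p)))
      with (K * ((1 - 2 / 2 ^ S (S p)) * zeta_nat (S (S p))))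
      by (unfold K; rewrite <- (tech_pow_Rmult 2 (S p)); field; apply pow_nonzero; lra).
    apply (is_lim_seq_scal_l _ K ((1 - 2 / 2 ^ S (S p)) * zeta_nat (S (S p)))).
    apply is_lim_seq_sum_alt_zeta_term.
Qed.

(** * Change of variables *)

Lemma RInt_pow_mul_shift_diff (f : R -> R) (n : nat) (x b : R) :
  (forall u, continuous f u) ->
  RInt (fun l => l ^ n * (f (l + x) - f (l - x))) 0 b =
  RInt (fun u => (u - x) ^ n * f u) 0 (b + x) - RInt (fun u => (u + x) ^ n * f u) 0 (b - x)
  - (RInt (fun u => (u - x) ^ n * f u) 0 x + RInt (fun u => (u + x) ^ n * f u) (- x) 0).
Proof.
  intros Hf.
  set (phi1 := fun u => (u - x) ^ n * f u).
  set (phi2 := fun u => (u + x) ^ n * f u).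
  assert (Hphi1 : forall z, continuous phi1 z)
    by (intros z; apply continuous_poly_mul; [auto_derive|]; trivial).
  assert (Hphi2 : forall z, continuous phi2 z)
    by (intros z; apply continuous_poly_mul; [auto_derive|]; trivial).
  assert (E1 : RInt (fun l => l ^ n * f (l + x)) 0 b = RInt phi1 x (b + x)).
  { transitivity (RInt phi1 (0 + x) (b + x)); [|now rewrite Rplus_0_l].
    rewrite <- RInt_comp_plus by exact Hphi1.
    apply RInt_ext. intros y _. unfold phi1. f_equal. f_equal. ring. }
  assert (E2 : RInt (fun l => l ^ n * f (l - x)) 0 b = RInt phi2 (- x) (b - x)).
  { transitivity (RInt phi2 (0 + - x) (b + - x)); [|now rewrite Rplus_0_l].
    rewrite <- RInt_comp_plus by exact Hphi2.
    apply RInt_ext. intros y _. unfold phi2. f_equal. f_equal. ring. }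
  assert (C1 : RInt phi1 0 x + RInt phi1 x (b + x) = RInt phi1 0 (b + x))
    by (apply (RInt_Chasles (V := R_CompleteNormedModule)); apply ex_RInt_of_continuous, Hphi1).
  assert (C2 : RInt phi2 (- x) 0 + RInt phi2 0 (b - x) = RInt phi2 (- x) (b - x))
    by (apply (RInt_Chasles (V := R_CompleteNormedModule)); apply ex_RInt_of_continuous, Hphi2).
  assert (Hdiff : RInt (fun l => l ^ n * (f (l + x) - f (l - x))) 0 b =
    RInt (fun l => l ^ n * f (l + x)) 0 b - RInt (fun l => l ^ n * f (l - x)) 0 b).
  { rewrite <- (RInt_minus (V := R_CompleteNormedModule)).
    - apply RInt_ext. intros y _. unfold minus, plus, opp. simpl. ring.
    - apply ex_RInt_of_continuous. intros z. apply continuous_poly_mul; [auto_derive; trivial|].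
      apply (continuous_comp (fun l => l + x) f); [|apply Hf].
      apply (@ex_derive_continuous R_AbsRing R_NormedModule). auto_derive. trivial.
    - apply ex_RInt_of_continuous. intros z. apply continuous_poly_mul; [auto_derive; trivial|].
      apply (continuous_comp (fun l => l - x) f); [|apply Hf].
      apply (@ex_derive_continuous R_AbsRing R_NormedModule). auto_derive. trivial. }
  lra.
Qed.

Lemma RInt_odd_pow_boundary (f : R -> R) (k : nat) (x : R) :
  (forall u, continuous f u) -> (forall y, f y - f (- y) = y) ->
  RInt (fun u => (u - x) ^ (2 * k + 1) * f u) 0 x
  + RInt (fun u => (u + x) ^ (2 * k + 1) * f u) (- x) 0
  = RInt (fun u => (u - x) ^ (2 * k + 1) * u) 0 x.
Proof.
  intros Hf Hrefl.
  set (n := (2 * k + 1)%nat).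
  set (phi2 := fun u => (u + x) ^ n * f u).
  assert (Hphi2 : forall z, continuous phi2 z)
    by (intros z; apply continuous_poly_mul; [auto_derive|]; trivial).
  assert (Hphi2_opp : forall z, continuous (fun y => phi2 (- y)) z).
  { intros z. apply (continuous_comp (fun y => - y) phi2); [|apply Hphi2].
    apply (@ex_derive_continuous R_AbsRing R_NormedModule). auto_derive. trivial. }
  assert (Hreflect : RInt phi2 (- x) 0 = RInt (fun y => phi2 (- y)) 0 x).
  { rewrite <- (opp_RInt_swap (V := R_CompleteNormedModule) (fun y => phi2 (- y)) x 0)
      by (apply ex_RInt_of_continuous, Hphi2_opp).
    rewrite (RInt_comp_opp phi2 x 0 Hphi2), Ropp_0.
    change (opp (- ?a)) with (- - a). rewrite Ropp_involutive. reflexivity. }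
  rewrite Hreflect, <- (RInt_plus (V := R_CompleteNormedModule)).
  - apply RInt_ext. intros y _. unfold phi2, plus. simpl.
    replace (- y + x) with (- (y - x)) by ring. unfold n. rewrite pow_opp_odd.
    transitivity ((y - x) ^ (2 * k + 1) * (f y - f (- y))); [ring | now rewrite Hrefl].
  - apply ex_RInt_of_continuous. intros z.
    apply continuous_poly_mul; [auto_derive|]; trivial.
  - apply ex_RInt_of_continuous, Hphi2_opp.
Qed.

Lemma RInt_pow_sub_mul_id (n : nat) (x : R) :
  RInt (fun u => (u - x) ^ n * u) 0 x = (-1) ^ n * x ^ (n + 2) / (INR (n + 1) * INR (n + 2)).
Proof.
  apply is_RInt_unique.
  set (F := fun v => (v - x) ^ S (S n) / INR (S (S n)) + x * (v - x) ^ S n / INR (S n)).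
  assert (Hn : 0 < INR (S n)) by (apply lt_0_INR; lia).
  replace ((-1) ^ n * x ^ (n + 2) / (INR (n + 1) * INR (n + 2))) with (F x - F 0).
  - apply (@is_RInt_derive R_CompleteNormedModule F).
    + intros v _. unfold F. auto_derive; [trivial|].
      change (match n with 0%nat => 1 | S _ => INR n + 1 end) with (INR (S n)).
      replace (v + - x) with (v - x) by ring. field. lra.
    + intros v _. apply continuous_poly_mul; [auto_derive; trivial | apply continuous_id].
  - unfold F.
    rewrite Rminus_eq_0, Rminus_0_l, !pow_i by lia.
    replace (n + 2)%nat with (S (S n)) by lia. replace (n + 1)%nat with (S n) by lia.
    replace (- x) with (-1 * x) by ring.
    rewrite !Rpow_mult_distr, <- !tech_pow_Rmult, (S_INR (S n)).
    field. lra.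
Qed.

Lemma ex_derive_fL (z : R) : ex_derive fL z.
Proof. unfold fL. auto_derive. pose proof (exp_pos (- z / 2)). lra. Qed.

Lemma continuous_fL (z : R) : continuous fL z.
Proof. apply (@ex_derive_continuous R_AbsRing R_NormedModule), ex_derive_fL. Qed.

Lemma fL_sub_fL_opp (y : R) : fL y - fL (- y) = y.
Proof.
  unfold fL.
  replace (1 + exp (- - y / 2)) with (exp (y / 2) * (1 + exp (- y / 2))).
  - rewrite ln_mult, ln_exp; [field | apply exp_pos |].
    pose proof (exp_pos (- y / 2)). lra.
  - rewrite Rmult_plus_distr_l, <- exp_plus.
    replace (y / 2 + - y / 2) with 0 by field. replace (- - y / 2) with (y / 2) by field.
    rewrite exp_0. ring.
Qed.

Definition fL_moment (p : nat) : R := -2 * (INR (fact p) * (2 ^ S p - 1) * zeta_nat (S (S p))).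

Lemma is_lim_RInt_pow_mul_fL (p : nat) :
  is_lim (fun b => RInt (fun u => u ^ p * fL u) 0 b) p_infty (fL_moment p).
Proof.
  apply is_lim_ext with (fun b => -2 * RInt (fun u => u ^ p * ln (1 + exp (- u / 2))) 0 b).
  - intros b. symmetry. apply is_RInt_unique.
    apply (is_RInt_ext (fun u => scal (-2) (u ^ p * ln (1 + exp (- u / 2))))).
    + intros u _. unfold fL, scal. simpl. unfold mult. simpl. ring.
    + apply (is_RInt_scal (V := R_NormedModule)), (RInt_correct (V := R_CompleteNormedModule)).
      apply ex_RInt_of_ex_derive. intros z. auto_derive. pose proof (exp_pos (- z / 2)). lra.
  - apply (is_lim_scal_l _ (-2) _ (INR (fact p) * (2 ^ S p - 1) * zeta_nat (S (S p)))).
    apply is_lim_RInt_pow_mul_ln1p_exp_half.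
Qed.

Lemma is_lim_RInt_binomial_mul_fL (a : R) (n : nat) :
  is_lim (fun b => RInt (fun u => (u + a) ^ n * fL u) 0 b) p_infty
    (sum_f_R0 (fun j => Binomial.C n j * a ^ (n - j) * fL_moment j) n).
Proof.
  apply is_lim_ext with (fun b =>
    sum_f_R0 (fun j => Binomial.C n j * a ^ (n - j) * RInt (fun u => u ^ j * fL u) 0 b) n).
  - intros b. symmetry. apply is_RInt_unique.
    apply (is_RInt_ext (fun u =>
      sum_f_R0 (fun j => scal (Binomial.C n j * a ^ (n - j)) (u ^ j * fL u)) n)).
    + intros u _. rewrite binomial, Rmult_comm, scal_sum.
      apply sum_eq. intros j _. unfold scal. simpl. unfold mult. simpl. ring.
    + apply is_RInt_sum_f_R0. intros j.
      apply (is_RInt_scal (V := R_NormedModule)), (RInt_correct (V := R_CompleteNormedModule)).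
      apply ex_RInt_of_continuous. intros z.
      apply continuous_poly_mul; [auto_derive; trivial | apply continuous_fL].
  - apply (is_lim_sum_f_R0 (fun j b =>
      Binomial.C n j * a ^ (n - j) * RInt (fun u => u ^ j * fL u) 0 b)).
    intros j. apply (is_lim_scal_l _ _ _ (fL_moment j)), is_lim_RInt_pow_mul_fL.
Qed.

Lemma binomial_moment_term_even (k m : nat) (x : R) : (m <= k)%nat ->
  Binomial.C (2 * k + 1) (2 * m) * (- x) ^ (2 * k + 1 - 2 * m) * fL_moment (2 * m)
  - Binomial.C (2 * k + 1) (2 * m) * x ^ (2 * k + 1 - 2 * m) * fL_moment (2 * m) =
  INR (fact (2 * k + 1)) *
    (theta_shift (S m) * x ^ (2 * k + 3 - 2 * S m) / INR (fact (2 * k + 3 - 2 * S m))).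
Proof.
  intros Hm.
  unfold Binomial.C, fL_moment, theta_shift.
  replace (2 * k + 1 - 2 * m)%nat with (2 * (k - m) + 1)%nat by lia.
  replace (2 * k + 3 - 2 * S m)%nat with (2 * (k - m) + 1)%nat by lia.
  replace (2 * S m)%nat with (S (S (2 * m))) by lia.
  replace (S (S (2 * m)) + 1)%nat with (S (S (S (2 * m)))) by lia.
  rewrite pow_opp_odd, <- !(tech_pow_Rmult 2).
  pose proof (INR_fact_neq_0 (2 * m)). pose proof (INR_fact_neq_0 (2 * (k - m) + 1)).
  field. auto.
Qed.

Lemma binomial_moment_term_odd (k m : nat) (x : R) : (m <= k)%nat ->
  (- x) ^ (2 * k + 1 - (2 * m + 1)) = x ^ (2 * k + 1 - (2 * m + 1)).
Proof.
  intros Hm. replace (2 * k + 1 - (2 * m + 1))%nat with (2 * (k - m))%nat by lia.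
  apply pow_opp_even.
Qed.

Lemma theta_shift_0_term (k : nat) (x : R) :
  INR (fact (2 * k + 1)) *
    (theta_shift 0 * x ^ (2 * k + 3 - 2 * 0) / INR (fact (2 * k + 3 - 2 * 0))) =
  - ((-1) ^ (2 * k + 1) * x ^ (2 * k + 1 + 2) / (INR (2 * k + 1 + 1) * INR (2 * k + 1 + 2))).
Proof.
  replace (theta_shift 0) with 1 by (unfold theta_shift, zeta_nat; simpl; field).
  replace (2 * k + 3 - 2 * 0)%nat with (S (S (2 * k + 1))) by lia.
  replace (2 * k + 1 + 2)%nat with (S (S (2 * k + 1))) by lia.
  replace (2 * k + 1 + 1)%nat with (S (2 * k + 1)) by lia.
  rewrite Nat.add_1_r, pow_1_odd, !fact_simpl, !mult_INR.
  field. repeat split; try apply INR_fact_neq_0; apply not_0_INR; lia.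
Qed.

Lemma sum_theta_shift_eq_binomial_moments (k : nat) (x : R) :
  INR (fact (2 * k + 1)) *
    sum_f_R0 (fun i => theta_shift i * x ^ (2 * k + 3 - 2 * i)
                        / INR (fact (2 * k + 3 - 2 * i))) (S k)
  = sum_f_R0 (fun j => Binomial.C (2 * k + 1) j * (- x) ^ (2 * k + 1 - j) * fL_moment j) (2 * k + 1)
    - sum_f_R0 (fun j => Binomial.C (2 * k + 1) j * x ^ (2 * k + 1 - j) * fL_moment j) (2 * k + 1)
    - (-1) ^ (2 * k + 1) * x ^ (2 * k + 1 + 2) / (INR (2 * k + 1 + 1) * INR (2 * k + 1 + 2)).
Proof.
  set (g := fun i => theta_shift i * x ^ (2 * k + 3 - 2 * i) / INR (fact (2 * k + 3 - 2 * i))).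
  assert (Hpairs : sum_f_R0 (fun j =>
      Binomial.C (2 * k + 1) j * (- x) ^ (2 * k + 1 - j) * fL_moment j
      - Binomial.C (2 * k + 1) j * x ^ (2 * k + 1 - j) * fL_moment j) (2 * k + 1)
    = sum_f_R0 (fun i => g (S i) * INR (fact (2 * k + 1))) k).
  { rewrite sum_f_R0_pairs. apply sum_eq. intros m Hm. cbv beta.
    rewrite binomial_moment_term_odd, binomial_moment_term_even by exact Hm.
    unfold g. ring. }
  rewrite <- minus_sum, Hpairs, decomp_sum by lia. simpl pred.
  rewrite Rmult_plus_distr_l, scal_sum. unfold g at 1. rewrite theta_shift_0_term. ring.
Qed.

Theorem lemma5p3 (k : nat) (x : R) :
  is_RInt_gen (fun l : R => l ^ (2 * k + 1) * (fL (l + x) - fL (l - x)))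
    (at_point 0) (Rbar_locally p_infty)
    (INR (Factorial.fact (2 * k + 1)) *
     sum_f_R0 (fun i : nat =>
       theta_shift i * x ^ (2 * k + 3 - 2 * i) / INR (Factorial.fact (2 * k + 3 - 2 * i)))
       (S k)).
Proof.
  apply is_RInt_gen_of_is_lim.
  { intros b. apply ex_RInt_of_continuous. intros z.
    apply continuous_poly_mul; [auto_derive; trivial|].
    apply (@ex_derive_continuous R_AbsRing R_NormedModule).
    auto_derive. repeat split; apply ex_derive_fL. }
  apply is_lim_ext with (fun b =>
    RInt (fun u => (u + - x) ^ (2 * k + 1) * fL u) 0 (b + x)
    - RInt (fun u => (u + x) ^ (2 * k + 1) * fL u) 0 (b + - x)
    - RInt (fun u => (u - x) ^ (2 * k + 1) * u) 0 x).
  { intros b. rewrite RInt_pow_mul_shift_diff, RInt_odd_pow_boundary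
      by (exact continuous_fL || exact fL_sub_fL_opp).
    reflexivity. }
  rewrite sum_theta_shift_eq_binomial_moments, <- RInt_pow_sub_mul_id.
  apply is_lim_minus'; [apply is_lim_minus' | apply is_lim_const];
    apply (is_lim_comp_plus (fun b => RInt _ 0 b)), is_lim_RInt_binomial_mul_fL.
Qed.
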